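(* For every $p\ge2$ and every integer $1\le i\le N-1$, the dimensions of consecutive models of $\mathcal M_1$ satisfy $d_{m_{i+1}}\le 2\,d_{m_i}$.
   Context: Let $p\ge 2$ be an integer. $\Lambda=\{0,\dots,p-1\}^2$ is the $p\times p$ discrete torus; indices of $p\times p$ arrays are taken modulo $p$. $\Theta$ is the vector space of real $p\times p$ arrays $\theta$ indexed by $\Lambda$ with $\theta[0,0]=0$ and $\theta[i,j]=\theta[-i,-j]$ for all $(i,j)$. Toroidal norm: $|(i,j)|_t^2=(i\wedge(p-i))^2+(j\wedge(p-j))^2$ for $(i,j)\in\Lambda$. For $r\ge0$, $m(r)=\{(i,j)\in\Lambda\setminus\{(0,0)\}:|(i,j)|_t\le r\}$; $\mathcal M_1$ is the collection of the distinct sets $m(r)$, totally ordered by inclusion as $\emptyset=m_0\subsetneq m_1\subsetneq\dots\subsetneq m_N=\Lambda\setminus\{(0,0)\}$. For $m\in\mathcal M_1$, $\Theta_m=\{\theta\in\Theta:\theta[i,j]=0\ \forall(i,j)\notin m\}$ and $d_m=\dim\Theta_m$ (equivalently, the number of pairs $\{(i,j),(-i,-j)\}$ contained in $m$). *)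

From mathcomp Require Import all_boot.
Set Implicit Arguments. Unset Strict Implicit. Unset Printing Implicit Defensive.

Definition torus (p : nat) := ('I_p * 'I_p)%type.

Definition negI (p : nat) (i : 'I_p) : 'I_p :=
  Ordinal (ltn_pmod (p - i) (leq_ltn_trans (leq0n i) (ltn_ord i))).

Definition negT (p : nat) (x : torus p) : torus p := (negI x.1, negI x.2).

Definition nonzeroT (p : nat) (x : torus p) : bool :=
  ~~ ((val x.1 == 0) && (val x.2 == 0)).

Definition tnorm2 (p : nat) (x : torus p) : nat :=
  (minn (val x.1) (p - val x.1)) ^ 2 + (minn (val x.2) (p - val x.2)) ^ 2.

(* m(r) expressed through the squared radius s (s = floor(r^2)):
   {x <> 0 : |x|_t^2 <= s} *)
Definition msq (p s : nat) : {set torus p} :=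
  [set x : torus p | nonzeroT x && (tnorm2 x <= s)].

Definition inM1 (p : nat) (m : {set torus p}) : Prop :=
  exists s : nat, m = msq p s.

Definition dimM (p : nat) (m : {set torus p}) : nat :=
  #|[set [set x; negT x] | x in m]|.

From mathcomp Require Import all_boot zify.
Set Implicit Arguments. Unset Strict Implicit. Unset Printing Implicit Defensive.

(* Write m = m(s) and m' = m(s') (squared radii s < s').
   1. The half-plane H = {0 < 2i < p} ∪ {(i = 0 or 2i = p) and 2j <= p}
      meets every pair {x, -x} exactly once, so d_X = #|X ∩ H| for every
      symmetric X; all sets m(s) are symmetric.
   2. As m' is the successor of m, every nonzero point of norm below that
      of a point of m' \ m lies in m; hence m' \ m is a single level set,
      of norm >= 2 since m is nonempty.
   3. A "descent" map on coordinates stays in H, avoids 0 and lowers the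
      norm; knowing the source norm it can be undone ("ascend"), so it is
      injective on level sets.  Thus #|(m' ∩ H) \ m| <= #|m ∩ H| and
      d_{m'} = #|m' ∩ H ∩ m| + #|(m' ∩ H) \ m| <= 2 #|m ∩ H| = 2 d_m.
   Step 3 comes first (on natural numbers), then steps 1 and 2 on the torus. *)

Definition tabs (p c : nat) : nat := minn c (p - c).
Definition tnormN (p i j : nat) : nat := tabs p i ^ 2 + tabs p j ^ 2.

Lemma tabs_id p c : 2 * c <= p -> tabs p c = c.
Proof. by rewrite /tabs; lia. Qed.

Lemma tabs_opp p c : p < 2 * c -> c <= p -> tabs p c = p - c.
Proof. by rewrite /tabs; lia. Qed.

Definition halfplane (p i j : nat) : bool :=
  (0 < 2 * i < p) || ((i == 0) || (2 * i == p)) && (2 * j <= p).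

Lemma halfplane_le p i j : halfplane p i j -> 2 * i <= p.
Proof. by rewrite /halfplane; lia. Qed.

Definition descend (p i j : nat) : nat * nat :=
  if 2 <= i then (i.-1, j)
  else if i == 1 then
    if 2 * j <= p then (0, j) else if j == p.-1 then (1, 0) else (0, p.-1 - j)
  else (0, j.-1).

Lemma descend_bound p i j : i < p -> j < p ->
  (descend p i j).1 < p /\ (descend p i j).2 < p.
Proof. by rewrite /descend; repeat case: ifP; move=> /=; lia. Qed.

Lemma descend_descent p i j : j < p -> halfplane p i j -> 2 <= tnormN p i j ->
  let: (i', j') := descend p i j in
  [&& halfplane p i' j', ~~ ((i' == 0) && (j' == 0))
    & tnormN p i' j' < tnormN p i j].
Proof.
move=> lt_j hH; have le_i := halfplane_le hH.
rewrite /tnormN /descend (tabs_id le_i) /halfplane.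
case: ifP => [i_ge2|i_lt2].
  rewrite (@tabs_id p i.-1); last lia.
  move=> _; apply/and3P; split; [lia|lia|].
  by rewrite ltn_add2r ltn_exp2r; lia.
case: ifP => [/eqP i1|/eqP i_ne1].
  case: ifP => [j_small|j_large].
    by rewrite (tabs_id j_small) tabs_id //; subst; nia.
  rewrite tabs_opp; [|lia|lia].
  by case: ifP => [/eqP j_last|j_not_last]; rewrite !tabs_id; lia.
have i0 : i = 0 by lia.
have j_small : 2 * j <= p by move: hH; rewrite /halfplane i0; lia.
by rewrite i0 !tabs_id; nia.
Qed.

(* Recovers the source of a descent step from its image and the norm N of
   the source: the three ways of landing on the line i = 0 at height j give
   the three distinct norms (j+1)^2, 1 + j^2 and 1 + (j+1)^2. *)
Definition ascend (p N : nat) (ij : nat * nat) : nat * nat :=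
  let: (i, j) := ij in
  if i == 0 then
    if N == j.+1 ^ 2 then (0, j.+1)
    else if N == 1 + j ^ 2 then (1, j) else (1, p.-1 - j)
  else if (i == 1) && (j == 0) && (N == 2) then (1, p.-1) else (i.+1, j).

Lemma ascend_descend p i j : j < p -> halfplane p i j -> 2 <= tnormN p i j ->
  ascend p (tnormN p i j) (descend p i j) = (i, j).
Proof.
move=> lt_j hH; have le_i := halfplane_le hH.
rewrite /tnormN /descend (tabs_id le_i).
case: ifP => [i_ge2|i_lt2] /=.
  have -> : (i.-1 == 0) = false by lia.
  have -> : (i.-1 == 1) && (j == 0) && (i ^ 2 + tabs p j ^ 2 == 2) = false.
    apply/negbTE/negP => /andP [/andP [/eqP i2 _] /eqP].
    by rewrite -(prednK (ltnW i_ge2)) i2; lia.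
  by rewrite prednK //; lia.
case: ifP => [/eqP i1|/eqP i_ne1].
  subst i; case: ifP => [j_small|j_large].
    rewrite (tabs_id j_small) /= => hN.
    have -> : (1 ^ 2 + j ^ 2 == j.+1 ^ 2) = false by nia.
    by rewrite eqxx.
  rewrite tabs_opp; [|lia|lia].
  case: ifP => [/eqP j_last|j_not_last] /= hN.
    by rewrite j_last; have -> : 1 ^ 2 + (p - p.-1) ^ 2 == 2 by lia.
  have -> : (1 ^ 2 + (p - j) ^ 2 == (p.-1 - j).+1 ^ 2) = false by nia.
  have -> : (1 ^ 2 + (p - j) ^ 2 == 1 + (p.-1 - j) ^ 2) = false by nia.
  by congr pair; lia.
have i0 : i = 0 by lia.
have j_small : 2 * j <= p by move: hH; rewrite /halfplane i0; lia.
subst i; rewrite (tabs_id j_small) /= => hN.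
have j_pos : 0 < j by nia.
by rewrite prednK // eqxx.
Qed.

Lemma val_negI p (i : 'I_p) :
  val (negI i) = if val i == 0 then 0 else p - val i.
Proof.
rewrite /negI /=; case: eqP => [->|i_ne0]; first by rewrite subn0 modnn.
by rewrite modn_small //; have := ltn_ord i; lia.
Qed.

Lemma negIK p : involutive (@negI p).
Proof.
move=> i; apply/val_inj; rewrite !val_negI /=; have := ltn_ord i.
by case: ifP => /eqP; case: ifP => /eqP; lia.
Qed.

Lemma negTK p : involutive (@negT p).
Proof. by case=> i j; rewrite /negT /= !negIK. Qed.

Lemma nonzeroT_negT p (x : torus p) : nonzeroT (negT x) = nonzeroT x.
Proof.
rewrite /nonzeroT !val_negI /=; have := ltn_ord x.1; have := ltn_ord x.2.
by case: ifP => /eqP; case: ifP => /eqP; lia.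
Qed.

Lemma tabs_negI p (i : 'I_p) : tabs p (val (negI i)) = tabs p (val i).
Proof. by rewrite /tabs val_negI /=; have := ltn_ord i; case: ifP => /eqP; lia. Qed.

Lemma tnorm2E p (x : torus p) : tnorm2 x = tnormN p x.1 x.2.
Proof. by []. Qed.

Lemma tnorm2_negT p (x : torus p) : tnorm2 (negT x) = tnorm2 x.
Proof. by rewrite !tnorm2E /tnormN !tabs_negI. Qed.

Lemma tnorm2_gt0 p (x : torus p) : nonzeroT x -> 0 < tnorm2 x.
Proof.
by rewrite /nonzeroT /tnorm2 /=; have := ltn_ord x.1; have := ltn_ord x.2; nia.
Qed.

Definition halfT (p : nat) : {set torus p} :=
  [set x : torus p | halfplane p (val x.1) (val x.2)].

Lemma halfT_cover p (x : torus p) : (x \in halfT p) || (negT x \in halfT p).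
Proof.
rewrite !inE /halfplane !val_negI /=; have := ltn_ord x.1; have := ltn_ord x.2.
by case: ifP => /eqP; case: ifP => /eqP; lia.
Qed.

Lemma halfT_fixed p (x : torus p) :
  x \in halfT p -> negT x \in halfT p -> negT x = x.
Proof.
case: x => i j; rewrite !inE /halfplane !val_negI /= => hx hnx.
have lt_i := ltn_ord i; have lt_j := ltn_ord j; rewrite /negT.
by congr pair; apply/val_inj; rewrite val_negI /=;
  move: hx hnx; repeat case: ifP => /eqP; lia.
Qed.

Lemma dimM_sym p (X : {set torus p}) :
  (forall x, x \in X -> negT x \in X) -> dimM X = #|X :&: halfT p|.
Proof.
move=> symX; rewrite /dimM.
have -> : [set [set x; negT x] | x in X] =
          [set [set x; negT x] | x in X :&: halfT p].
  apply/eqP; rewrite eqEsubset; apply/andP; split; last exact/imsetS/subsetIl.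
  apply/subsetP => _ /imsetP [x xX ->].
  have [xH|nxH] := orP (halfT_cover x).
    by apply/imsetP; exists x => //; apply/setIP.
  apply/imsetP; exists (negT x); first by apply/setIP; split; [apply: symX|].
  by rewrite negTK setUC.
rewrite card_in_imset // => x y /setIP [_ xH] /setIP [_ yH] same_pair.
have : y \in [set x; negT x] by rewrite same_pair set21.
rewrite !inE => /orP [/eqP -> //|/eqP y_negx].
by rewrite y_negx halfT_fixed // -y_negx.
Qed.

Lemma msq_negT p s (x : torus p) : (negT x \in msq p s) = (x \in msq p s).
Proof. by rewrite !inE nonzeroT_negT tnorm2_negT. Qed.

Lemma msq_new_norm p s (x : torus p) :
  msq p s != set0 -> nonzeroT x -> x \notin msq p s -> 1 < tnorm2 x.
Proof.
case/set0Pn=> z; rewrite !inE => /andP [z_nz z_le] x_nz.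
by rewrite x_nz /= -ltnNge; have := tnorm2_gt0 z_nz; lia.
Qed.

Definition descendT p (x : torus p) : torus p :=
  (insubd x.1 (descend p x.1 x.2).1, insubd x.2 (descend p x.1 x.2).2).

Lemma descendT_val p (x : torus p) :
  (val (descendT x).1, val (descendT x).2) = descend p x.1 x.2.
Proof.
have [lt1 lt2] := descend_bound (ltn_ord x.1) (ltn_ord x.2).
by rewrite /descendT /= !val_insubd lt1 lt2; case: descend.
Qed.

Section Successor.

Variables (p s s' : nat).
Hypothesis successor :
  forall m, inM1 m -> ~ (msq p s \proper m /\ m \proper msq p s').

(* Step 2: m(tnorm2 y) would lie strictly between m(s) and m(s'). *)
Lemma successor_below (x y : torus p) :
  x \in msq p s' -> x \notin msq p s -> nonzeroT y -> tnorm2 y < tnorm2 x ->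
  y \in msq p s.
Proof.
move=> x_new x_old y_nz y_lt; apply/negPn/negP => y_old.
have s_lt : s < tnorm2 y by move: y_old; rewrite inE y_nz -ltnNge.
have x_le : tnorm2 x <= s' by move: x_new; rewrite inE => /andP [].
apply: (successor (m := msq p (tnorm2 y))); first by exists (tnorm2 y).
split; apply/properP; split.
- by apply/subsetP => z; rewrite !inE => /andP [-> ?]; lia.
- by exists y => //; rewrite inE y_nz leqnn.
- by apply/subsetP => z; rewrite !inE => /andP [-> ?]; lia.
- by exists x => //; rewrite inE negb_and -ltnNge y_lt orbT.
Qed.

Lemma successor_level (x y : torus p) :
  x \in msq p s' :\: msq p s -> y \in msq p s' :\: msq p s ->
  tnorm2 x = tnorm2 y.
Proof.
move=> /setDP [x_new x_old] /setDP [y_new y_old].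
have nz (z : torus p) : z \in msq p s' -> nonzeroT z by rewrite inE => /andP [].
case: (ltngtP (tnorm2 x) (tnorm2 y)) => // lt_xy.
  by rewrite (successor_below y_new y_old (nz x x_new) lt_xy) in x_old.
by rewrite (successor_below x_new x_old (nz y y_new) lt_xy) in y_old.
Qed.

(* Step 3: descent injects the new representatives into the old ones. *)
Lemma new_half_card : msq p s != set0 ->
  #|(msq p s' :&: halfT p) :\: msq p s| <= #|msq p s :&: halfT p|.
Proof.
move=> m_ne0; set New := (_ :\: _).
have newP x : x \in New ->
    [/\ x \in msq p s' :\: msq p s, halfplane p x.1 x.2 & 1 < tnorm2 x].
  case/setDP => /setIP [x_new xH] x_old; rewrite inE in xH.
  split=> //; first exact/setDP.
  by apply: msq_new_norm x_old; move: x_new; rewrite inE => /andP [].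
rewrite -(@card_in_imset _ _ (@descendT p) New).
  apply/subset_leq_card/subsetP => _ /imsetP [x x_in ->].
  have [x_lvl xH x_ge2] := newP x x_in.
  have := descend_descent (ltn_ord x.2) xH x_ge2.
  rewrite -descendT_val => /and3P [dH d_nz d_lt].
  apply/setIP; split; last by rewrite inE.
  case/setDP: x_lvl => x_new x_old.
  exact: successor_below x_new x_old d_nz d_lt.
move=> x y x_in y_in same_image.
have [x_lvl xH x_ge2] := newP x x_in; have [y_lvl yH y_ge2] := newP y y_in.
have same_descent : descend p x.1 x.2 = descend p y.1 y.2.
  by rewrite -!descendT_val same_image.
have same_norm : tnormN p x.1 x.2 = tnormN p y.1 y.2.
  by rewrite -!tnorm2E; apply: successor_level.
have [/val_inj eq1 /val_inj eq2] : (val x.1, val x.2) = (val y.1, val y.2).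
  rewrite -(ascend_descend (ltn_ord x.2) xH x_ge2) same_norm same_descent.
  exact: ascend_descend (ltn_ord y.2) yH y_ge2.
exact: injective_projections eq1 eq2.
Qed.

End Successor.

Theorem mainTheorem20 (p : nat) (hp : 2 <= p) (m m' : {set torus p}) :
  inM1 m -> inM1 m' -> m != set0 -> m \proper m' ->
  (forall m'' : {set torus p}, inM1 m'' -> ~ (m \proper m'' /\ m'' \proper m')) ->
  dimM m' <= 2 * dimM m.
Proof.
move=> [s ->] [s' ->] m_ne0 _ successor.
rewrite !dimM_sym => [|x|x]; rewrite ?msq_negT //.
rewrite -(cardsID (msq p s) (msq p s' :&: halfT p)) mul2n -addnn.
apply: leq_add; last exact: new_half_card.
by apply/subset_leq_card; rewrite setIAC setSI ?subsetIr.
Qed.
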